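(* Let $Y$ be a nonnegative random variable with mean $\mu$ and variance $\sigma^2$, both finite and positive, and let $Y^s$ be defined on the same probability space as $Y$, have the $Y$-size bias distribution, and satisfy $Y^s\ge Y$ with probability one. Let $W=(Y-\mu)/\sigma$ and $W^s=(Y^s-\mu)/\sigma$. Then for any $z\in\mathbb{R}$ and $a>0$, $$\frac{\mu}{\sigma}E\left[(W^s-W)\mathbf{1}_{\{W^s-W\le a\}}\mathbf{1}_{\{z\le W\le z+a\}}\right]\le a.$$
   Context: For a nonnegative random variable $Y$ with finite positive mean $\mu$, a random variable $Y^s$ has the $Y$-size bias distribution if $E[Yg(Y)]=\mu E[g(Y^s)]$ for all bounded continuous functions $g$. *)

From HB Require Import structures.
From mathcomp Require Import all_boot all_order all_algebra.
From mathcomp Require Import all_classical all_reals all_analysis.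
Set Implicit Arguments. Unset Strict Implicit. Unset Printing Implicit Defensive.
Import Order.TTheory GRing.Theory Num.Theory numFieldNormedType.Exports.
Local Open Scope ring_scope.

Definition size_bias d (T : measurableType d) (R : realType)
  (P : probability T R) (Y Ys : T -> R) : Prop :=
  forall g : R -> R, continuous g -> (exists M : R, forall x, `|g x| <= M) ->
    ('E_P[fun w => (Y w * g (Y w))%R] = 'E_P[Y] * 'E_P[fun w => g (Ys w)])%E.

From HB Require Import structures.
From mathcomp Require Import all_boot all_order all_algebra.
From mathcomp Require Import all_classical all_reals all_analysis.
From mathcomp Require Import ring lra measurable_realfun.
Set Implicit Arguments. Unset Strict Implicit. Unset Printing Implicit Defensive.
Import Order.TTheory GRing.Theory Num.Theory numFieldNormedType.Exports.
Local Open Scope classical_set_scope.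
Local Open Scope ring_scope.

(** Test the size-bias identity against the bounded continuous ramp
    [h x = clamp (x - z - a) (-a) a].  Since [h] is nondecreasing with slope
    one on [[z, z + 2a]], the integrand is dominated by [h Ws - h W].  The
    size-bias identity turns [mu E[h Ws - h W]] into [E[(Y - mu) h W]], and
    [t u <= a sigma / 2 + a t^2 / (2 sigma)] for [|u| <= a] bounds the latter
    by [a sigma]. *)

Section expectation_ae.
Context d (T : measurableType d) (R : realType) (P : probability T R).

Lemma bounded_integrable (f : T -> R) (M : R) : measurable_fun setT f ->
  (forall x, `|f x| <= M) -> P.-integrable setT (EFin \o f).
Proof.
move=> mf fM; apply: measurable_bounded_integrable => //.
  by rewrite (le_lt_trans (probability_le1 _ _)) ?ltry.
exists M; split; first by rewrite num_real.
by move=> y My x _; exact: le_trans (fM x) (ltW My).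
Qed.

Lemma expectation_le_ae (f g : T -> R) :
  measurable_fun setT f -> P.-integrable setT (EFin \o g) ->
  {ae P, forall x, f x <= g x} -> ('E_P[f] <= 'E_P[g])%E.
Proof.
move=> mf /integrableP[mg _] [N [mN PN fgN]].
(* [f] need not be integrable, so compare positive and negative parts. *)
have mF : measurable_fun setT (EFin \o f) by exact/measurable_EFinP.
have ae_of_le (u v : T -> \bar R) : (forall x, f x <= g x -> (u x <= v x)%E) ->
    {ae P, forall x, setT x -> (u x <= v x)%E}.
  move=> uv; exists N; split=> // x /= Nx; apply: fgN => fgx; apply: Nx => _.
  by apply: uv; apply: contrapT.
rewrite unlock integralE [leRHS]integralE; apply: leeB.
- apply: (ae_ge0_le_integral measurableT _ (measurable_funepos mF) _
    (measurable_funepos mg)); [by move=> x _; exact: funepos_ge0..|].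
  apply: ae_of_le => x fgx; rewrite !funeposE.
  by rewrite /= ge_max !le_max lexx !lee_fin fgx !orbT.
- apply: (ae_ge0_le_integral measurableT _ (measurable_funeneg mg) _
    (measurable_funeneg mF)); [by move=> x _; exact: funeneg_ge0..|].
  apply: ae_of_le => x fgx; rewrite !funenegE.
  by rewrite /= ge_max !le_max lexx !lee_fin lerN2 fgx !orbT.
Qed.

End expectation_ae.

Section ramp.
Context (R : realType) (z a : R).

Definition ramp (x : R) : R := (`|x - z| - `|x - z - 2 * a|) / 2.

Lemma ramp_bound x : 0 <= a -> `|ramp x| <= a.
Proof.
move=> a_ge0; have := ler_dist_dist (x - z) (x - z - 2 * a).
rewrite (_ : x - z - (x - z - 2 * a) = 2 * a); last by ring.
rewrite (@ger0_norm _ (2 * a)); last lra.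
by rewrite /ramp !ler_norml => /andP[? ?]; apply/andP; split; lra.
Qed.

Lemma ramp_nondecreasing : 0 <= a -> {homo ramp : x y / x <= y}.
Proof.
move=> a_ge0 x y xy; rewrite /ramp ler_pM2r ?invr_gt0 //.
have [x1|x1] := lerP 0 (x - z); have [y1|y1] := lerP 0 (y - z);
have [x2|x2] := lerP 0 (x - z - 2 * a); have [y2|y2] := lerP 0 (y - z - 2 * a);
rewrite ?(ger0_norm x1) ?(ltr0_norm x1) ?(ger0_norm y1) ?(ltr0_norm y1)
  ?(ger0_norm x2) ?(ltr0_norm x2) ?(ger0_norm y2) ?(ltr0_norm y2); lra.
Qed.

Lemma ramp_slope1 x : z <= x <= z + 2 * a -> ramp x = x - z - a.
Proof.
move=> /andP[xz xza]; rewrite /ramp ger0_norm ?subr_ge0 // ler0_norm; last lra.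
by field.
Qed.

Lemma continuous_ramp : continuous ramp.
Proof.
move=> x; apply: cvgM; last exact: cvg_cst.
apply: cvgB; apply: cvg_norm.
  by apply: cvgB; [exact: cvg_id|exact: cvg_cst].
by apply: cvgB; [apply: cvgB; [exact: cvg_id|exact: cvg_cst]|exact: cvg_cst].
Qed.

Lemma ramp_increment (x y : R) : z <= x <= z + a -> y - x <= a -> x <= y ->
  ramp y - ramp x = y - x.
Proof.
move=> /andP[zx xza] yxa xy.
by rewrite !ramp_slope1; [ring | apply/andP; split; lra..].
Qed.

End ramp.

Lemma mul_le_AMGM (R : realType) (s t u a : R) : 0 < s -> `|u| <= a ->
  t * u <= a / 2 * s + a / (2 * s) * t ^+ 2.
Proof.
move=> s_gt0 ua; have a_ge0 : 0 <= a := le_trans (normr_ge0 u) ua.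
have tu : t * u <= `|t| * a.
  by rewrite (le_trans (ler_norm _)) // normrM ler_wpM2l.
have -> : a / 2 * s + a / (2 * s) * t ^+ 2
          = `|t| * a + a / (2 * s) * (s - `|t|) ^+ 2.
  by rewrite -(real_normK (num_real t)); field; rewrite gt_eqF.
rewrite (le_trans tu) // lerDl mulr_ge0 ?sqr_ge0 // divr_ge0 //; lra.
Qed.

Section size_bias_expectations.
Context d (T : measurableType d) (R : realType) (P : probability T R).

Lemma measurable_ramp (z a : R) : measurable_fun setT (ramp z a).
Proof. by apply: continuous_measurable_fun; exact: continuous_ramp. Qed.

Lemma ramp_comp_Lfun1 (z a : R) (V : T -> R) : 0 <= a ->
  measurable_fun setT V -> ramp z a \o V \in Lfun P 1.
Proof.
move=> a_ge0 mV; apply/Lfun1_integrable/(@bounded_integrable _ _ _ _ _ a).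
  exact: measurableT_comp (measurable_ramp z a) mV.
by move=> w; exact: ramp_bound.
Qed.

Lemma expectation_truncated_increment_le (z a : R) (W Ws : T -> R) :
  0 <= a -> measurable_fun setT W -> measurable_fun setT Ws ->
  {ae P, forall w, W w <= Ws w} ->
  ('E_P[fun w => ((Ws w - W w) * \1_[set v | Ws v - W v <= a] w
                               * \1_[set v | z <= W v <= z + a] w)%R]
    <= 'E_P[ramp z a \o Ws] - 'E_P[ramp z a \o W])%E.
Proof.
move=> a_ge0 mW mWs WWs.
have mD : measurable_fun setT (Ws \- W) by exact: measurable_funB.
have mA : measurable [set v | Ws v - W v <= a].
  rewrite -[X in measurable X]setTI.
  have -> : [set v | Ws v - W v <= a] = (Ws \- W) @^-1` `]-oo, a].
    by apply/seteqP; split => v /=; rewrite in_itv.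
  exact: mD measurableT _ (measurable_itv _).
have mB : measurable [set v | z <= W v <= z + a].
  rewrite -[X in measurable X]setTI.
  have -> : [set v | z <= W v <= z + a] = W @^-1` `[z, z + a].
    by apply/seteqP; split => v /=; rewrite in_itv.
  exact: mW measurableT _ (measurable_itv _).
rewrite -expectationB ?ramp_comp_Lfun1 //; apply: expectation_le_ae.
- apply: measurable_funM; [apply: measurable_funM|]; by [|exact: measurable_indic].
- by apply/Lfun1_integrable; rewrite rpredB ?ramp_comp_Lfun1.
apply: filterS WWs => w /= Www.
have := ramp_nondecreasing z a_ge0 Www; rewrite -subr_ge0 !indicE /= => ramp_ge.
have [wA|] := boolP (w \in [set v | Ws v - W v <= a]); last by rewrite mulr0 mul0r.
have [wB|] := boolP (w \in [set v | z <= W v <= z + a]); last by rewrite mulr0.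
by rewrite !mulr1 ramp_increment //; move: wA wB; rewrite !inE.
Qed.

Lemma size_bias_centered (Y Ys : {RV P >-> R}) (mu M : R) (g : R -> R) :
  (Y : T -> R) \in Lfun P 1 -> ('E_P[Y] = mu%:E)%E -> size_bias P Y Ys ->
  continuous g -> (forall x, `|g x| <= M) ->
  ('E_P[fun w => ((Y w - mu) * g (Y w))%R]
    = mu%:E * ('E_P[g \o Ys] - 'E_P[g \o Y]))%E.
Proof.
move=> Y1 EY sbY cg gM.
have mg : measurable_fun setT g by exact: continuous_measurable_fun.
have gV1 (V : {RV P >-> R}) : g \o V \in Lfun P 1.
  apply/Lfun1_integrable/(@bounded_integrable _ _ _ _ _ M); last by move=> w; exact: gM.
  exact: measurableT_comp.
have YgY1 : (Y \* (g \o Y)) \in Lfun P 1.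
  apply/Lfun1_integrable.
  have gY_bounded : [bounded (g \o Y) x | x in setT].
    exists M; split; first by rewrite num_real.
    by move=> r Mr x _; exact: le_trans (gM _) (ltW Mr).
  have Y_int : P.-integrable setT (EFin \o Y) by exact/Lfun1_integrable.
  apply: eq_integrable (integrableMl measurableT Y_int _ gY_bounded) => //.
  exact: measurableT_comp.
have -> : (fun w => (Y w - mu) * g (Y w)) = (Y \* (g \o Y)) \- mu \o* (g \o Y).
  by apply/funext => w /=; ring.
rewrite expectationB ?Lfun_scale // expectationZl //.
rewrite [X in (X - _)%E](sbY g cg); last by exists M.
by rewrite EY muleBr // fin_num_adde_defl // fin_numN expectation_fin_num.
Qed.

Lemma expectation_centered_mul_le (Y : {RV P >-> R}) (G : T -> R) (mu sigma a : R) :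
  (Y : T -> R) \in Lfun P 2%:E -> ('E_P[Y] = mu%:E)%E ->
  ('V_P[Y] = (sigma ^+ 2)%:E)%E -> 0 < sigma ->
  measurable_fun setT G -> (forall w, `|G w| <= a) ->
  ('E_P[fun w => ((Y w - mu) * G w)%R] <= (a * sigma)%:E)%E.
Proof.
move=> Y2 EY VY sigma_gt0 mG Ga.
set C := (Y \- cst mu)%R.
have C2 : C \in Lfun P 2%:E by rewrite rpredB ?lee1n // => ?; exact: Lfun_cst.
have ECC : ('E_P[C \* C] = (sigma ^+ 2)%:E)%E by rewrite -VY /variance [in RHS]unlock EY.
pose K := cst (a / 2 * sigma) \+ (a / (2 * sigma)) \o* (C \* C).
have K1 : K \in Lfun P 1 by rewrite rpredD ?Lfun_cst ?Lfun_scale ?Lfun2_mul_Lfun1.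
have -> : (a * sigma)%:E = 'E_P[K]%E.
  rewrite expectationD ?Lfun_cst ?Lfun_scale ?Lfun2_mul_Lfun1 //.
  rewrite expectation_cst expectationZl ?Lfun2_mul_Lfun1 // ECC -EFinM -EFinD.
  by congr (_%:E); field; rewrite gt_eqF.
apply: expectation_le_ae; [|exact/Lfun1_integrable|].
  by apply: measurable_funM => //; apply: measurable_funB.
by apply: aeW => w; rewrite /K /= [C w * C w * _]mulrC -expr2; exact: mul_le_AMGM.
Qed.

End size_bias_expectations.

Theorem lemma2p1 (d : measure_display) (T : measurableType d) (R : realType)
  (P : probability T R) (Y Ys : {RV P >-> R}) (mu sigma : R)
  (HY0 : {ae P, forall w, 0 <= Y w})
  (HY2 : (Y : T -> R) \in Lfun P 2%:E)
  (Hmu : ('E_P[Y] = mu%:E)%E) (Hmu0 : 0 < mu)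
  (Hsig : ('V_P[Y] = (sigma ^+ 2)%:E)%E) (Hsig0 : 0 < sigma)
  (Hsb : size_bias P Y Ys)
  (HYs : {ae P, forall w, Y w <= Ys w})
  (z a : R) (Ha : 0 < a) :
  let W := fun v : T => (Y v - mu) / sigma in
  let Ws := fun v : T => (Ys v - mu) / sigma in
  ((mu / sigma)%:E *
   'E_P[fun w =>
          ((Ws w - W w) * \1_[set v : T | Ws v - W v <= a] w
                        * \1_[set v : T | z <= W v <= z + a] w)%R]
   <= a%:E)%E.
Proof.
cbv zeta; pose std (y : R) := (y - mu) / sigma.
have std_cont : continuous std.
  by move=> y; apply: cvgM; [apply: cvgB; [exact: cvg_id | exact: cvg_cst] | exact: cvg_cst].
have m_std : measurable_fun setT std := continuous_measurable_fun std_cont.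
have W_le_Ws : {ae P, forall w, std (Y w) <= std (Ys w)}.
  by apply: filterS HYs => w; rewrite ler_pM2r ?invr_gt0 // lerD2r.
have increment_le := expectation_truncated_increment_le z (ltW Ha)
  (measurableT_comp m_std (measurable_funP Y))
  (measurableT_comp m_std (measurable_funP Ys)) W_le_Ws.
pose g := ramp z a \o std.
have g_cont : continuous g.
  by move=> y; apply: continuous_comp; [exact: std_cont | exact: continuous_ramp].
have centered := size_bias_centered (Lfun_subset12 (fin_num_measure P _ measurableT) HY2)
  Hmu Hsb g_cont (fun y => ramp_bound _ _ (ltW Ha)).
have moment_le := expectation_centered_mul_le HY2 Hmu Hsig Hsig0
  (measurableT_comp (measurable_ramp z a) (measurableT_comp m_std (measurable_funP Y)))
  (fun w => ramp_bound _ _ (ltW Ha)).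
have sigma_inv_ge0 : (0 <= sigma^-1%:E)%E by rewrite lee_fin invr_ge0 ltW.
apply: le_trans (lee_wpmul2l _ increment_le) _.
  by rewrite lee_fin divr_ge0 // ltW.
rewrite EFinM (muleC mu%:E) -muleA -centered.
apply: le_trans (lee_wpmul2l sigma_inv_ge0 moment_le) _.
by rewrite -EFinM mulrC mulfK ?gt_eqF.
Qed.
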